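(* Assume $m_1=1$ and $q_j(t)=e^{tJ}a_j$, $j=1,\dots,n$, where $a_j\in\mathbb R^2$ satisfy $a_j=\sum_{k\ne j}m_k\frac{a_j-a_k}{\|a_j-a_k\|^{\alpha+1}}$. Let $\varepsilon\in(0,1)$, $\omega=\varepsilon^{-(\alpha+1)/2}$, and $\nu>0$ with $(\omega-1)/\nu=\mathfrak p\in\mathbb Z$. Let $x_j(\tau)=e^{-J\omega\tau/\nu}q_j(\tau/\nu)$, $y_j=x_1-x_j$, and let $h$ be defined by $h(x,\tau)=\varepsilon^{\alpha-1}\sum_{j=2}^n m_j\big[\phi_\alpha(\|y_j(\tau)+\varepsilon x\|)+\frac{y_j(\tau)}{\|y_j(\tau)\|^{\alpha+1}}\cdot\varepsilon x\big]$ if $\alpha>1$, and $h(x,\tau)=\sum_{j=2}^n m_j\big[-\log\frac{\|y_j(\tau)+\varepsilon x\|}{\|y_j(\tau)\|}+\frac{y_j(\tau)}{\|y_j(\tau)\|^2}\cdot\varepsilon x\big]$ if $\alpha=1$. Then $h(x,\tau)$ is $2\pi$-periodic in $\tau$, $\nabla_xh(x,\tau)=\mathcal O(\varepsilon^{\alpha+1})$, and $\nu/\omega=(1-\varepsilon^{(\alpha+1)/2})/\mathfrak p$.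
   Context: $n\ge2$, $\alpha\ge1$, masses $m_1,\dots,m_n>0$. $\phi_\alpha(\lambda)=\frac1{\alpha-1}\lambda^{1-\alpha}$ for $\alpha>1$, $\phi_1(\lambda)=-\log\lambda$. $J=\begin{pmatrix}0&1\\-1&0\end{pmatrix}$, $e^{J\theta}=\cos\theta\,I+\sin\theta\,J$, $\|\cdot\|$ the Euclidean norm. The estimate $\mathcal O(\varepsilon^{\alpha+1})$ is meant as $\varepsilon\to0$, uniformly in $\tau$ and in $x$ in bounded sets. *)

From Stdlib Require Import Reals Lra ZArith.
From Coquelicot Require Import Coquelicot.
Open Scope R_scope.

Definition vec := (R * R)%type.
Definition vadd (u v : vec) : vec := (fst u + fst v, snd u + snd v).
Definition vsub (u v : vec) : vec := (fst u - fst v, snd u - snd v).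
Definition vscal (c : R) (v : vec) : vec := (c * fst v, c * snd v).
Definition vdot (u v : vec) : R := fst u * fst v + snd u * snd v.
Definition enorm (v : vec) : R := sqrt (fst v ^ 2 + snd v ^ 2).

(* J = [[0,1],[-1,0]] acting on column vectors: J (a,b) = (b,-a). *)
Definition Jmul (v : vec) : vec := (snd v, - fst v).
(* e^{J theta} = cos theta I + sin theta J *)
Definition expJ (theta : R) (v : vec) : vec :=
  vadd (vscal (cos theta) v) (vscal (sin theta) (Jmul v)).

Definition vsum (f : nat -> vec) (lo hi : nat) : vec :=
  (sum_n_m (fun k => fst (f k)) lo hi, sum_n_m (fun k => snd (f k)) lo hi).

Definition phi (alpha lam : R) : R :=
  if Req_EM_T alpha 1 then - ln lam
  else / (alpha - 1) * Rpower lam (1 - alpha).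

Definition central_config (n : nat) (m : nat -> R) (a : nat -> vec) (alpha : R) : Prop :=
  forall j, (1 <= j <= n)%nat ->
    a j = vsum (fun k => if Nat.eqb k j then (0, 0)
                         else vscal (m k / Rpower (enorm (vsub (a j) (a k))) (alpha + 1))
                                    (vsub (a j) (a k))) 1 n.

Definition omega (eps alpha : R) : R := Rpower eps (- (alpha + 1) / 2).

Definition qq (a : nat -> vec) (j : nat) (t : R) : vec := expJ t (a j).

Definition xx (a : nat -> vec) (eps alpha nu : R) (j : nat) (tau : R) : vec :=
  expJ (- (omega eps alpha * tau / nu)) (qq a j (tau / nu)).

Definition yy (a : nat -> vec) (eps alpha nu : R) (j : nat) (tau : R) : vec :=
  vsub (xx a eps alpha nu 1 tau) (xx a eps alpha nu j tau).

Definition hh (n : nat) (m : nat -> R) (a : nat -> vec) (alpha eps nu : R)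
    (x : vec) (tau : R) : R :=
  if Req_EM_T alpha 1 then
    sum_n_m (fun j =>
      let y := yy a eps alpha nu j tau in
      m j * ( - ln (enorm (vadd y (vscal eps x)) / enorm y)
              + vdot (vscal (/ (enorm y ^ 2)) y) (vscal eps x))) 2 n
  else
    Rpower eps (alpha - 1) *
    sum_n_m (fun j =>
      let y := yy a eps alpha nu j tau in
      m j * ( phi alpha (enorm (vadd y (vscal eps x)))
              + vdot (vscal (/ Rpower (enorm y) (alpha + 1)) y) (vscal eps x))) 2 n.

(* In the frame rotating with angular velocity omega/nu the relative positions are
   y_j(tau) = e^{-J p tau} (a_1 - a_j): rotations by an integer multiple of tau, hence
   2 pi-periodic and of constant length |a_1 - a_j| > 0.  In both cases alpha > 1 and
   alpha = 1 the gradient of h is eps^alpha sum_j m_j (F(y_j) - F(y_j + eps x)) with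
   F(v) = v / |v|^(alpha + 1), the linear correction cancelling the leading term.  On the
   ball of radius |y|/2 around y, F is Lipschitz with constant O(|y|^-(alpha + 1)) (mean
   value theorem for t^(alpha + 1)), which yields the extra factor eps |x|. *)

From Stdlib Require Import Reals ZArith Lra Lia.
From Coquelicot Require Import Coquelicot.
Open Scope R_scope.

Local Notation plane := (prod_NormedModule R_AbsRing R_NormedModule R_NormedModule).

Lemma enorm_norm (v : vec) : enorm v = norm (v : R * R).
Proof.
destruct v as [v1 v2]. unfold enorm, norm; simpl. unfold prod_norm, norm, abs; simpl.
rewrite !Rmult_1_r, <- !Rabs_mult, !Rabs_right by nra. reflexivity.
Qed.

Lemma enorm_vsub_gt0 u v : u <> v -> 0 < enorm (vsub u v).
Proof. rewrite enorm_norm. exact (norm_minus_gt_0 (V := plane) u v). Qed.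

Lemma enorm_vscal c v : enorm (vscal c v) = Rabs c * enorm v.
Proof.
destruct v as [v1 v2]. unfold enorm, vscal; cbn [fst snd].
replace ((c * v1) ^ 2 + (c * v2) ^ 2) with (c² * (v1 ^ 2 + v2 ^ 2)) by (unfold Rsqr; ring).
rewrite sqrt_mult_alt, sqrt_Rsqr_abs by apply Rle_0_sqr. reflexivity.
Qed.

Lemma enorm_vsubC u v : enorm (vsub u v) = enorm (vsub v u).
Proof.
rewrite !enorm_norm, <- (norm_opp (V := plane)).
f_equal. exact (opp_minus (G := prod_AbelianGroup _ _) u v).
Qed.

Lemma Rabs_enorm_sub_le u v : Rabs (enorm u - enorm v) <= enorm (vsub u v).
Proof.
rewrite !enorm_norm. change (vsub u v) with (minus (u : R * R) v).
exact (norm_triangle_inv (V := plane) u v).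
Qed.

Lemma vsum_sum_n_m (f : nat -> vec) lo hi : vsum f lo hi = sum_n_m (G := plane) f lo hi.
Proof.
unfold vsum, sum_n_m, Iter.iter_nat. generalize (seq.iota lo (S hi - lo)) as l.
induction l as [|k l IH]; [reflexivity|]. cbn [Iter.iter]. rewrite <- IH. reflexivity.
Qed.

Lemma enorm_vsum_le (f : nat -> vec) lo hi :
  enorm (vsum f lo hi) <= sum_n_m (fun k => enorm (f k)) lo hi.
Proof.
rewrite enorm_norm, vsum_sum_n_m.
eapply Rle_trans; [exact (norm_sum_n_m (V := plane) f lo hi)|].
right. apply sum_n_m_ext. intros k. symmetry. apply enorm_norm.
Qed.

Lemma vdot_vscal_l c u v : vdot (vscal c u) v = c * vdot u v.
Proof. unfold vdot, vscal; simpl. ring. Qed.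

Lemma vdot_vsum (f : nat -> vec) lo hi e :
  vdot (vsum f lo hi) e = sum_n_m (fun k => vdot (f k) e) lo hi.
Proof.
unfold vdot, vsum; simpl.
transitivity (plus (sum_n_m (fun k => mult (fst (f k)) (fst e)) lo hi)
                   (sum_n_m (fun k => mult (snd (f k)) (snd e)) lo hi)).
- rewrite !(sum_n_m_mult_r (K := R_Ring)). reflexivity.
- rewrite <- sum_n_m_plus. reflexivity.
Qed.

Lemma enorm_triang u v : enorm (vadd u v) <= enorm u + enorm v.
Proof. rewrite !enorm_norm. exact (norm_triangle (V := plane) u v). Qed.

Lemma vsub_vadd_l y z : vsub (vadd y z) y = z.
Proof. destruct y, z. unfold vsub, vadd; cbn [fst snd]. f_equal; ring. Qed.

Lemma enorm_vadd_gt0 y z : enorm z < enorm y -> 0 < enorm (vadd y z).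
Proof.
intros Hzy. pose proof (Rabs_enorm_sub_le (vadd y z) y) as H.
rewrite vsub_vadd_l in H. apply Rabs_le_between' in H. lra.
Qed.

Lemma expJ_expJ s t v : expJ s (expJ t v) = expJ (s + t) v.
Proof.
destruct v as [v1 v2]. unfold expJ, vadd, vscal, Jmul; cbn [fst snd].
rewrite cos_plus, sin_plus. f_equal; ring.
Qed.

Lemma vsub_expJ t u v : vsub (expJ t u) (expJ t v) = expJ t (vsub u v).
Proof. unfold expJ, vadd, vsub, vscal, Jmul; cbn [fst snd]. f_equal; ring. Qed.

Lemma enorm_expJ t v : enorm (expJ t v) = enorm v.
Proof.
destruct v as [v1 v2]. unfold enorm, expJ, vadd, vscal, Jmul; cbn [fst snd].
f_equal. pose proof (sin2_cos2 t) as H. unfold Rsqr in H. nra.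
Qed.

Lemma expJ_period_nat t (k : nat) v : expJ (t + 2 * INR k * PI) v = expJ t v.
Proof. unfold expJ. rewrite cos_period, sin_period. reflexivity. Qed.

Lemma expJ_period t (k : Z) v : expJ (t + 2 * IZR k * PI) v = expJ t v.
Proof.
destruct (Z_le_gt_dec 0 k).
- rewrite <- (Z2Nat.id k), <- INR_IZR_INZ by lia. apply expJ_period_nat.
- rewrite <- (expJ_period_nat _ (Z.to_nat (- k))), INR_IZR_INZ, Z2Nat.id, opp_IZR by lia.
  f_equal. ring.
Qed.

Section Rotating_frame.

Variables (a : nat -> vec) (eps alpha nu : R).

Lemma enorm_yy j tau : enorm (yy a eps alpha nu j tau) = enorm (vsub (a 1%nat) (a j)).
Proof. unfold yy, xx, qq. rewrite !expJ_expJ, vsub_expJ, enorm_expJ. reflexivity. Qed.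

Variable p : Z.
Hypotheses (Hnu : 0 < nu) (Hp : (omega eps alpha - 1) / nu = IZR p).

Lemma yy_rotation j tau : yy a eps alpha nu j tau = expJ (- (IZR p * tau)) (vsub (a 1%nat) (a j)).
Proof.
unfold yy, xx, qq. rewrite !expJ_expJ, vsub_expJ. f_equal.
rewrite <- Hp. field. lra.
Qed.

Lemma yy_periodic j tau : yy a eps alpha nu j (tau + 2 * PI) = yy a eps alpha nu j tau.
Proof.
rewrite !yy_rotation.
replace (- (IZR p * (tau + 2 * PI))) with (- (IZR p * tau) + 2 * IZR (- p) * PI)
  by (rewrite opp_IZR; ring).
apply expJ_period.
Qed.

Lemma hh_periodic n m x tau :
  hh n m a alpha eps nu x (tau + 2 * PI) = hh n m a alpha eps nu x tau.
Proof.
unfold hh. destruct (Req_EM_T alpha 1); [|f_equal];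
  apply sum_n_m_ext; intros j; rewrite yy_periodic; reflexivity.
Qed.

End Rotating_frame.

Lemma nu_div_omega eps alpha nu p : 1 <= alpha -> 0 < eps < 1 -> 0 < nu ->
  (omega eps alpha - 1) / nu = IZR p ->
  nu / omega eps alpha = (1 - Rpower eps ((alpha + 1) / 2)) / IZR p.
Proof.
intros Halpha Heps Hnu Hp.
set (E := Rpower eps ((alpha + 1) / 2)).
assert (HE : 0 < E < 1).
{ assert (ln eps < 0) by (rewrite <- ln_1; apply ln_increasing; lra).
  assert (0 < (alpha + 1) / 2) by lra.
  split; [apply exp_pos|]. unfold E, Rpower.
  apply (Rlt_le_trans _ (exp 0)); [apply exp_increasing; nra | rewrite exp_0; lra]. }
assert (Homega : omega eps alpha = / E).
{ unfold omega, E. rewrite <- Rpower_Ropp. f_equal. field. }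
rewrite Homega in Hp |- *. rewrite <- Hp.
assert (1 < / E) by (rewrite <- Rinv_1; apply Rinv_lt_contravar; lra).
field. lra.
Qed.

Definition force (alpha : R) (v : vec) : vec := vscal (/ Rpower (enorm v) (alpha + 1)) v.

Definition line (w e : vec) (s : R) : vec := vadd w (vscal s e).

Lemma force_1 v : 0 < enorm v -> force 1 v = vscal (/ enorm v ^ 2) v.
Proof.
intros Hv. unfold force. replace (1 + 1) with (INR 2) by (simpl; ring).
rewrite Rpower_pow by exact Hv. reflexivity.
Qed.

Lemma is_derive_enorm_line w e s : 0 < enorm (line w e s) ->
  is_derive (fun t => enorm (line w e t)) s (vdot (line w e s) e / enorm (line w e s)).
Proof.
destruct w as [w1 w2], e as [e1 e2]. unfold enorm, line, vadd, vscal, vdot; cbn [fst snd].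
intros Hv. assert (Hsq : 0 < (w1 + s * e1) ^ 2 + (w2 + s * e2) ^ 2).
{ rewrite <- sqrt_0 in Hv. apply sqrt_lt_0_alt in Hv. exact Hv. }
auto_derive; [lra|].
replace ((w1 + s * e1) * ((w1 + s * e1) * 1) + (w2 + s * e2) * ((w2 + s * e2) * 1))
  with ((w1 + s * e1) ^ 2 + (w2 + s * e2) ^ 2) by ring.
field. lra.
Qed.

Lemma is_derive_phi alpha l : 0 < l -> is_derive (phi alpha) l (- / Rpower l alpha).
Proof.
intros Hl. unfold phi. destruct (Req_EM_T alpha 1) as [->|Halpha].
- rewrite Rpower_1 by exact Hl. auto_derive; [exact Hl | field; lra].
- replace (- / Rpower l alpha) with (/ (alpha - 1) * ((1 - alpha) * Rpower l (1 - alpha - 1))).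
  + apply is_derive_scal, is_derive_Reals, derivable_pt_lim_power, Hl.
  + replace (1 - alpha - 1) with (- alpha) by ring. rewrite Rpower_Ropp.
    field. split; [apply Rgt_not_eq, exp_pos | lra].
Qed.

Lemma is_derive_neg_ln_div c l : 0 < c -> 0 < l -> is_derive (fun x => - ln (x / c)) l (- / l).
Proof.
intros Hc Hl. auto_derive; [apply Rdiv_lt_0_compat; assumption | field; lra].
Qed.

Lemma is_derive_potential_line (P : R -> R) alpha w e s :
  let v := line w e s in
  0 < enorm v -> is_derive P (enorm v) (- / Rpower (enorm v) alpha) ->
  is_derive (fun t => P (enorm (line w e t))) s (- vdot (force alpha v) e).
Proof.
intros v Hv HP.
pose proof (is_derive_comp P (fun t => enorm (line w e t)) s _ _ HP
  (is_derive_enorm_line w e s Hv)) as H.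
replace (- vdot (force alpha v) e) with (vdot v e / enorm v * - / Rpower (enorm v) alpha);
  [exact H|].
unfold force. rewrite vdot_vscal_l, Rpower_plus, Rpower_1 by exact Hv.
assert (0 < Rpower (enorm v) alpha) by apply exp_pos.
field. lra.
Qed.

Lemma is_derive_summand (P : R -> R) alpha mj c y eps x e s :
  let v := vadd y (vscal eps (line x e s)) in
  0 < enorm v -> is_derive P (enorm v) (- / Rpower (enorm v) alpha) ->
  is_derive (fun t => mj * (P (enorm (vadd y (vscal eps (line x e t))))
                            + vdot c (vscal eps (line x e t)))) s
    (eps * vdot (vscal mj (vsub c (force alpha v))) e).
Proof.
intros v Hv HP.
assert (Hline : forall t,
  vadd y (vscal eps (line x e t)) = line (vadd y (vscal eps x)) (vscal eps e) t)
  by (intros t; unfold line, vadd, vscal; cbn [fst snd]; f_equal; ring).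
assert (Hdot : forall t,
  vdot c (vscal eps (line x e t)) = vdot c (vscal eps x) + t * (eps * vdot c e))
  by (intros t; unfold line, vdot, vadd, vscal; cbn [fst snd]; ring).
apply (is_derive_ext (fun t => mj * (P (enorm (line (vadd y (vscal eps x)) (vscal eps e) t))
                                     + (vdot c (vscal eps x) + t * (eps * vdot c e))))).
{ intros t. rewrite Hline, Hdot. reflexivity. }
replace (eps * vdot (vscal mj (vsub c (force alpha v))) e)
  with (mj * (- vdot (force alpha v) (vscal eps e) + eps * vdot c e))
  by (unfold vdot, vscal, vsub; cbn [fst snd]; ring).
apply is_derive_scal, (is_derive_plus (K := R_AbsRing) (V := R_NormedModule)).
- unfold v in *. rewrite Hline in Hv, HP |- *. exact (is_derive_potential_line P alpha _ _ s Hv HP).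
- auto_derive; [exact I | ring].
Qed.

Lemma is_derive_sum_n_m (f : nat -> R -> R) (df : nat -> R) lo hi s :
  (forall k, (lo <= k <= hi)%nat -> is_derive (f k) s (df k)) ->
  is_derive (fun t => sum_n_m (fun k => f k t) lo hi) s (sum_n_m df lo hi).
Proof.
assert (Hempty : (hi < lo)%nat ->
  is_derive (fun t => sum_n_m (fun k => f k t) lo hi) s (sum_n_m df lo hi)).
{ intros Hlt. rewrite sum_n_m_zero by exact Hlt.
  apply (is_derive_ext (fun _ => 0)); [intros t; now rewrite sum_n_m_zero|].
  exact (is_derive_const (V := R_NormedModule) 0 s). }
induction hi as [|hi IH]; intros Hf.
- destruct lo as [|lo]; [|apply Hempty; lia].
  rewrite sum_n_n. apply (is_derive_ext (f 0%nat)); [intros t; now rewrite sum_n_n|].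
  apply Hf; lia.
- destruct (le_lt_dec lo (S hi)) as [Hle|]; [|apply Hempty; lia].
  destruct (Nat.eq_dec lo (S hi)) as [->|Hlo].
  + rewrite sum_n_n. apply (is_derive_ext (f (S hi))); [intros t; now rewrite sum_n_n|].
    apply Hf; lia.
  + rewrite sum_n_Sm by exact Hle.
    apply (is_derive_ext (fun t => plus (sum_n_m (fun k => f k t) lo hi) (f (S hi) t))).
    { intros t. now rewrite sum_n_Sm. }
    apply (is_derive_plus (V := R_NormedModule)); [|apply Hf; lia].
    apply IH; [intros; lia | intros k Hk; apply Hf; lia].
Qed.

Lemma inv_Rpower_sub_le b d A : 1 <= b -> 0 < d -> Rabs (A - d) <= d / 2 ->
  A * Rabs (/ Rpower d b - / Rpower A b) <= b * Rpower 3 (b - 1) / Rpower d b * Rabs (A - d).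
Proof.
intros Hb Hd HAd.
assert (HA : d / 2 <= A <= 3 * d / 2) by (apply Rabs_le_between' in HAd; lra).
assert (Hmin : d / 2 <= Rmin d A) by (apply Rmin_glb; lra).
assert (Hmax : Rmax d A <= 3 * d / 2) by (apply Rmax_lub; lra).
destruct (MVT_abs (fun t => Rpower t b) (fun t => b * Rpower t (b - 1)) d A) as [c [Hmvt Hc]].
{ intros c Hc. apply derivable_pt_lim_power. lra. }
set (P := Rpower d b) in *. set (Q := Rpower A (b - 1)). set (G := Rpower 3 (b - 1)).
assert (HP : 0 < P) by apply exp_pos.
assert (HQ : 0 < Q) by apply exp_pos.
assert (HAb : Rpower A b = Q * A).
{ unfold Q. rewrite <- (Rpower_1 A) at 3 by lra. rewrite <- Rpower_plus. f_equal. ring. }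
(* [c <= 3 d / 2 <= 3 A] bounds the mean-value slope by [b * 3^(b-1) * A^(b-1)]. *)
assert (Hslope : Rpower c (b - 1) <= G * Q).
{ unfold G, Q. rewrite Rpower_mult_distr by lra. apply Rle_Rpower_l; lra. }
rewrite HAb in Hmvt |- *.
rewrite Rabs_mult, (Rabs_right b), (Rabs_right (Rpower c (b - 1))) in Hmvt
  by (try apply Rle_ge, Rlt_le, exp_pos; lra).
replace (A * Rabs (/ P - / (Q * A))) with (Rabs (Q * A - P) / (P * Q)).
- rewrite Hmvt. set (Cc := Rpower c (b - 1)) in *.
  apply Rle_trans with (b * Rabs (A - d) / P * (Cc / Q)); [right; field; lra|].
  replace (b * G / P * Rabs (A - d)) with (b * Rabs (A - d) / P * G) by (field; lra).
  apply Rmult_le_compat_l.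
  + apply Rdiv_le_0_compat; [apply Rmult_le_pos; [lra | apply Rabs_pos] | exact HP].
  + apply Rle_div_l; [exact HQ | exact Hslope].
- replace (/ P - / (Q * A)) with ((Q * A - P) / (P * (Q * A))) by (field; lra).
  assert (0 < P * (Q * A)) by (apply Rmult_lt_0_compat; [lra | nra]).
  rewrite Rabs_div, (Rabs_right (P * (Q * A))) by lra. field. lra.
Qed.

Definition force_lip (alpha d : R) : R := (1 + (alpha + 1) * Rpower 3 alpha) / Rpower d (alpha + 1).

Lemma force_lipschitz alpha y w : 0 <= alpha -> 0 < enorm y -> enorm (vsub w y) <= enorm y / 2 ->
  enorm (vsub (force alpha y) (force alpha w)) <= force_lip alpha (enorm y) * enorm (vsub w y).
Proof.
intros Halpha Hy Hwy.
assert (HAd : Rabs (enorm w - enorm y) <= enorm (vsub w y)) by apply Rabs_enorm_sub_le.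
assert (Hsplit : vsub (force alpha y) (force alpha w) =
  vadd (vscal (/ Rpower (enorm y) (alpha + 1)) (vsub y w))
       (vscal (/ Rpower (enorm y) (alpha + 1) - / Rpower (enorm w) (alpha + 1)) w)).
{ unfold force. destruct y, w. unfold vadd, vsub, vscal; cbn [fst snd]. f_equal; ring. }
pose proof (inv_Rpower_sub_le (alpha + 1) (enorm y) (enorm w)) as H.
replace (alpha + 1 - 1) with alpha in H by ring.
set (d := enorm y) in *. set (A := enorm w) in *. set (r := enorm (vsub w y)) in *.
set (P := Rpower d (alpha + 1)) in *. set (G := Rpower 3 alpha) in *.
assert (HP : 0 < P) by apply exp_pos.
assert (HG : 0 < G) by apply exp_pos.
specialize (H ltac:(lra) Hy ltac:(lra)).
assert (HGr : (alpha + 1) * G / P * Rabs (A - d) <= (alpha + 1) * G / P * r).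
{ apply Rmult_le_compat_l; [apply Rdiv_le_0_compat; [nra | exact HP] | exact HAd]. }
rewrite Hsplit. eapply Rle_trans; [apply enorm_triang|].
rewrite !enorm_vscal, enorm_vsubC, (Rabs_right (/ P)) by (left; apply Rinv_0_lt_compat, HP).
fold A r. unfold force_lip. fold P G.
replace ((1 + (alpha + 1) * G) / P * r) with (/ P * r + (alpha + 1) * G / P * r) by (field; lra).
rewrite (Rmult_comm (Rabs _)). lra.
Qed.

Lemma sum_n_m_le_loc (f g : nat -> R) lo hi :
  (forall k, (lo <= k <= hi)%nat -> f k <= g k) -> sum_n_m f lo hi <= sum_n_m g lo hi.
Proof.
intros Hfg. rewrite (sum_n_m_ext_loc f (fun k => Rmin (f k) (g k))).
- apply sum_n_m_le. intros k. apply Rmin_r.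
- intros k Hk. symmetry. apply Rmin_left, Hfg, Hk.
Qed.

Lemma ex_pos_lower_bound (g : nat -> R) lo hi : (forall k, (lo <= k <= hi)%nat -> 0 < g k) ->
  exists delta, 0 < delta /\ forall k, (lo <= k <= hi)%nat -> delta <= g k.
Proof.
induction hi as [|hi IH]; intros Hg.
- destruct lo as [|lo].
  + exists (g 0%nat). split; [apply Hg; lia|]. intros k Hk. replace k with 0%nat by lia. lra.
  + exists 1. split; [lra | intros k Hk; lia].
- destruct IH as [delta [Hdelta Hle]]; [intros k Hk; apply Hg; lia|].
  destruct (le_lt_dec lo (S hi)).
  + exists (Rmin delta (g (S hi))). split; [apply Rmin_pos; [exact Hdelta | apply Hg; lia]|].
    intros k Hk. destruct (Nat.eq_dec k (S hi)) as [->|]; [apply Rmin_r|].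
    eapply Rle_trans; [apply Rmin_l | apply Hle; lia].
  + exists delta. split; [exact Hdelta | intros k Hk; lia].
Qed.

Definition hh_grad (n : nat) (m : nat -> R) (a : nat -> vec) (alpha eps nu : R)
    (x : vec) (tau : R) : vec :=
  vscal (Rpower eps alpha)
    (vsum (fun j => let y := yy a eps alpha nu j tau in
                    vscal (m j) (vsub (force alpha y) (force alpha (vadd y (vscal eps x))))) 2 n).

Section Gradient.

Variables (n : nat) (m : nat -> R) (a : nat -> vec) (alpha eps nu tau : R).
Hypothesis Heps : 0 < eps.

Let y j := yy a eps alpha nu j tau.

Section Line.

Hypothesis Hy : forall j, (2 <= j <= n)%nat -> 0 < enorm (y j).

Lemma is_derive_hh_line w e s x : line w e s = x ->
  (forall j, (2 <= j <= n)%nat -> 0 < enorm (vadd (y j) (vscal eps x))) ->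
  is_derive (fun t => hh n m a alpha eps nu (line w e t) tau) s
    (vdot (hh_grad n m a alpha eps nu x tau) e).
Proof.
intros <- Hw. unfold hh_grad, hh. rewrite vdot_vscal_l, vdot_vsum.
destruct (Req_EM_T alpha 1) as [->|Halpha].
- rewrite Rpower_1 by exact Heps. rewrite <- (sum_n_m_mult_l (K := R_Ring)).
  apply (is_derive_sum_n_m (fun j t =>
    m j * (- ln (enorm (vadd (y j) (vscal eps (line w e t))) / enorm (y j))
           + vdot (vscal (/ enorm (y j) ^ 2) (y j)) (vscal eps (line w e t))))).
  intros j Hj. change (yy a eps 1 nu j tau) with (y j).
  rewrite (force_1 (y j)) by (apply Hy; exact Hj).
  apply (is_derive_summand (fun l => - ln (l / enorm (y j))) 1 (m j) _ (y j) eps w e s);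
    [apply Hw; exact Hj|].
  rewrite Rpower_1 by (apply Hw; exact Hj).
  apply is_derive_neg_ln_div; [apply Hy | apply Hw]; exact Hj.
- replace (Rpower eps alpha) with (Rpower eps (alpha - 1) * eps)
    by (rewrite <- (Rpower_1 eps) at 2 by exact Heps; rewrite <- Rpower_plus; f_equal; ring).
  rewrite Rmult_assoc, <- (sum_n_m_mult_l (K := R_Ring)).
  apply is_derive_scal.
  apply (is_derive_sum_n_m (fun j t =>
    m j * (phi alpha (enorm (vadd (y j) (vscal eps (line w e t))))
           + vdot (force alpha (y j)) (vscal eps (line w e t))))).
  intros j Hj. change (yy a eps alpha nu j tau) with (y j).
  apply (is_derive_summand (phi alpha) alpha (m j) _ (y j) eps w e s); [apply Hw; exact Hj|].
  apply is_derive_phi, Hw, Hj.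
Qed.

Lemma is_derive_hh_fst x :
  (forall j, (2 <= j <= n)%nat -> 0 < enorm (vadd (y j) (vscal eps x))) ->
  is_derive (fun s => hh n m a alpha eps nu (s, snd x) tau) (fst x)
    (fst (hh_grad n m a alpha eps nu x tau)).
Proof.
intros Hw.
assert (Hline : forall s, line (0, snd x) (1, 0) s = (s, snd x))
  by (intros s; unfold line, vadd, vscal; cbn [fst snd]; f_equal; ring).
apply (is_derive_ext (fun s => hh n m a alpha eps nu (line (0, snd x) (1, 0) s) tau)).
{ intros s. rewrite Hline. reflexivity. }
replace (fst (hh_grad n m a alpha eps nu x tau))
  with (vdot (hh_grad n m a alpha eps nu x tau) (1, 0)) by (unfold vdot; cbn [fst snd]; ring).
apply is_derive_hh_line; [|exact Hw]. rewrite Hline. symmetry. apply surjective_pairing.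
Qed.

Lemma is_derive_hh_snd x :
  (forall j, (2 <= j <= n)%nat -> 0 < enorm (vadd (y j) (vscal eps x))) ->
  is_derive (fun s => hh n m a alpha eps nu (fst x, s) tau) (snd x)
    (snd (hh_grad n m a alpha eps nu x tau)).
Proof.
intros Hw.
assert (Hline : forall s, line (fst x, 0) (0, 1) s = (fst x, s))
  by (intros s; unfold line, vadd, vscal; cbn [fst snd]; f_equal; ring).
apply (is_derive_ext (fun s => hh n m a alpha eps nu (line (fst x, 0) (0, 1) s) tau)).
{ intros s. rewrite Hline. reflexivity. }
replace (snd (hh_grad n m a alpha eps nu x tau))
  with (vdot (hh_grad n m a alpha eps nu x tau) (0, 1)) by (unfold vdot; cbn [fst snd]; ring).
apply is_derive_hh_line; [|exact Hw]. rewrite Hline. symmetry. apply surjective_pairing.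
Qed.

End Line.

Variables (x : vec) (Rb delta : R).
Hypotheses (Halpha : 0 <= alpha) (Hdelta : 0 < delta)
  (Hm : forall j, (2 <= j <= n)%nat -> 0 <= m j)
  (Hdist : forall j, (2 <= j <= n)%nat -> delta <= enorm (vsub (a 1%nat) (a j)))
  (Hx : enorm x <= Rb) (HRb : eps * Rb <= delta / 2).

Lemma enorm_perturbation_le j : enorm (vsub (vadd (y j) (vscal eps x)) (y j)) <= eps * Rb.
Proof. rewrite vsub_vadd_l, enorm_vscal, Rabs_right by lra. apply Rmult_le_compat_l; lra. Qed.

Lemma enorm_hh_grad_le :
  enorm (hh_grad n m a alpha eps nu x tau)
  <= Rpower eps (alpha + 1)
     * (Rb * sum_n_m (fun j => m j * force_lip alpha (enorm (vsub (a 1%nat) (a j)))) 2 n).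
Proof.
unfold hh_grad. rewrite enorm_vscal, Rabs_right by (left; apply exp_pos).
rewrite Rpower_plus, Rpower_1, Rmult_assoc by exact Heps.
apply Rmult_le_compat_l; [left; apply exp_pos|].
eapply Rle_trans; [apply enorm_vsum_le|].
rewrite <- Rmult_assoc, <- (sum_n_m_mult_l (K := R_Ring)).
apply sum_n_m_le_loc. intros j Hj. cbv zeta. fold (y j).
rewrite <- (enorm_yy a eps alpha nu j tau). fold (y j).
assert (Hyj : delta <= enorm (y j)) by (unfold y; rewrite enorm_yy; apply Hdist, Hj).
assert (Hlip : 0 <= force_lip alpha (enorm (y j))).
{ apply Rdiv_le_0_compat; [|apply exp_pos]. assert (0 < Rpower 3 alpha) by apply exp_pos. nra. }
pose proof (enorm_perturbation_le j).
rewrite enorm_vscal, Rabs_right by (apply Rle_ge, Hm, Hj).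
change mult with Rmult.
replace (eps * Rb * (m j * force_lip alpha (enorm (y j))))
  with (m j * (force_lip alpha (enorm (y j)) * (eps * Rb))) by ring.
apply Rmult_le_compat_l; [apply Hm, Hj|].
eapply Rle_trans; [apply force_lipschitz; lra|].
apply Rmult_le_compat_l; assumption.
Qed.

Lemma hh_grad_spec :
  is_derive (fun s => hh n m a alpha eps nu (s, snd x) tau) (fst x)
    (fst (hh_grad n m a alpha eps nu x tau)) /\
  is_derive (fun s => hh n m a alpha eps nu (fst x, s) tau) (snd x)
    (snd (hh_grad n m a alpha eps nu x tau)) /\
  enorm (hh_grad n m a alpha eps nu x tau)
  <= Rpower eps (alpha + 1)
     * (Rb * sum_n_m (fun j => m j * force_lip alpha (enorm (vsub (a 1%nat) (a j)))) 2 n).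
Proof.
assert (Hy : forall j, (2 <= j <= n)%nat -> delta <= enorm (y j))
  by (intros j Hj; unfold y; rewrite enorm_yy; apply Hdist, Hj).
assert (Hy0 : forall j, (2 <= j <= n)%nat -> 0 < enorm (y j))
  by (intros j Hj; pose proof (Hy j Hj); lra).
assert (Hw : forall j, (2 <= j <= n)%nat -> 0 < enorm (vadd (y j) (vscal eps x))).
{ intros j Hj. apply enorm_vadd_gt0. pose proof (Hy j Hj) as Hyj.
  pose proof (enorm_perturbation_le j) as Hxj. rewrite vsub_vadd_l in Hxj. lra. }
split; [|split].
- exact (is_derive_hh_fst Hy0 x Hw).
- exact (is_derive_hh_snd Hy0 x Hw).
- exact enorm_hh_grad_le.
Qed.

End Gradient.

Theorem proposition4
  (n : nat) (m : nat -> R) (a : nat -> vec) (alpha : R)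
  (Hn : (2 <= n)%nat) (Halpha : 1 <= alpha)
  (Hm : forall j, (1 <= j <= n)%nat -> 0 < m j) (Hm1 : m 1%nat = 1)
  (Hdist : forall j k, (1 <= j <= n)%nat -> (1 <= k <= n)%nat -> j <> k -> a j <> a k)
  (Hcc : central_config n m a alpha) :
  (forall (eps nu : R) (p : Z),
      0 < eps < 1 -> 0 < nu -> (omega eps alpha - 1) / nu = IZR p ->
      (forall (x : vec) (tau : R),
          hh n m a alpha eps nu x (tau + 2 * PI) = hh n m a alpha eps nu x tau)
      /\ nu / omega eps alpha = (1 - Rpower eps ((alpha + 1) / 2)) / IZR p)
  /\
  (forall Rb : R, 0 < Rb ->
     exists C eps0 : R, 0 < eps0 /\
       forall (eps nu : R) (p : Z),
         0 < eps < 1 -> eps < eps0 -> 0 < nu -> (omega eps alpha - 1) / nu = IZR p ->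
         forall (x : vec) (tau : R), enorm x <= Rb ->
           exists g1 g2 : R,
             is_derive (fun s => hh n m a alpha eps nu (s, snd x) tau) (fst x) g1 /\
             is_derive (fun s => hh n m a alpha eps nu (fst x, s) tau) (snd x) g2 /\
             enorm (g1, g2) <= C * Rpower eps (alpha + 1)).
Proof.
split.
- intros eps nu p Heps Hnu Hp. split.
  + intros x tau. exact (hh_periodic a eps alpha nu p Hnu Hp n m x tau).
  + exact (nu_div_omega eps alpha nu p Halpha Heps Hnu Hp).
- intros Rb HRb.
  set (d j := enorm (vsub (a 1%nat) (a j))).
  assert (Hd : forall j, (2 <= j <= n)%nat -> 0 < d j)
    by (intros j Hj; apply enorm_vsub_gt0, Hdist; lia).
  destruct (ex_pos_lower_bound d 2 n Hd) as [delta [Hdelta Hdelta_le]].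
  exists (Rb * sum_n_m (fun j => m j * force_lip alpha (d j)) 2 n), (delta / (2 * Rb)).
  split; [apply Rdiv_lt_0_compat; lra|].
  intros eps nu p Heps Heps0 _ _ x tau Hx.
  assert (HepsRb : eps * Rb <= delta / 2).
  { apply (Rmult_lt_compat_r Rb) in Heps0; [|exact HRb].
    replace (delta / (2 * Rb) * Rb) with (delta / 2) in Heps0 by (field; lra). lra. }
  assert (Hm0 : forall j, (2 <= j <= n)%nat -> 0 <= m j) by (intros j Hj; left; apply Hm; lia).
  exists (fst (hh_grad n m a alpha eps nu x tau)), (snd (hh_grad n m a alpha eps nu x tau)).
  rewrite (Rmult_comm _ (Rpower eps (alpha + 1))).
  apply (hh_grad_spec n m a alpha eps nu tau ltac:(lra) x Rb delta); try lra; assumption.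
Qed.
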